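(* Let $M\ge2$ and let $\mathcal{P}$ be a Class II source set on $\{1,\dots,M\}$ with $P_1\ge P_2\ge\dots\ge P_M$ for every $P\in\mathcal{P}$, and let $D^{(M-1)}=\sup_{P\in\mathcal{P}}\sum_{i=2}^{M}P_i$. Then for $D\in(0,1]$, $\epsilon^*_{\mathrm{DP}}(\mathcal{P},D)=0$ if and only if $D\ge D^{(M-1)}$.
   Context: A source set is a nonempty set $\mathcal{P}$ of probability distributions on $\{1,\dots,M\}$; Class I means its convex hull contains the uniform distribution; Class II means it is not Class I and a single permutation orders all its distributions decreasingly. A mechanism is an $M\times M$ row-stochastic matrix $Q$ with entries $Q(j|i)$; its diagonal distortions are $D_i=1-Q(i|i)$. $Q$ is $(\mathcal{P},D)$-valid if $\sum_iP_iD_i\le D$ for all $P\in\mathcal{P}$ (average Hamming distortion); $\mathcal{Q}(\mathcal{P},D)$ is the set of these. $\epsilon_{\mathrm{DP}}(Q)=\min\{\epsilon\ge0:Q(\hat x|x_1)\le e^\epsilon Q(\hat x|x_2)\ \forall x_1,x_2,\hat x\}$ ($+\infty$ if none; all-zero columns allowed), and $\epsilon^*_{\mathrm{DP}}(\mathcal{P},D)=\min_{Q\in\mathcal{Q}(\mathcal{P},D)}\epsilon_{\mathrm{DP}}(Q)$. *)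

From HB Require Import structures.
From mathcomp Require Import all_boot all_order all_algebra.
From mathcomp Require Import all_classical all_reals all_analysis.
From mathcomp Require Import perm.
Set Implicit Arguments. Unset Strict Implicit. Unset Printing Implicit Defensive.
Import Order.TTheory GRing.Theory Num.Theory.
Local Open Scope classical_set_scope.
Local Open Scope ring_scope.

Section Defs.
Variables (R : realType) (M : nat).

(* A probability distribution on {1,...,M}, indexed here by 'I_M = {0,...,M-1}. *)
Definition is_distr (P : 'I_M -> R) : Prop :=
  (forall i, 0 <= P i) /\ \sum_(i < M) P i = 1.

Definition source_set (PP : set ('I_M -> R)) : Prop :=
  PP !=set0 /\ (forall P, PP P -> is_distr P).

(* The uniform distribution lies in the convex hull of PP
   (finite convex combinations of elements of PP). *)
Definition classI (PP : set ('I_M -> R)) : Prop :=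
  exists (n : nat) (w : 'I_n -> R) (Ps : 'I_n -> ('I_M -> R)),
    [/\ forall k, PP (Ps k), forall k, 0 <= w k, \sum_(k < n) w k = 1 &
        forall i, \sum_(k < n) w k * Ps k i = 1 / M%:R].

Definition classII (PP : set ('I_M -> R)) : Prop :=
  ~ classI PP /\
  exists s : {perm 'I_M}, forall P, PP P ->
    forall i j : 'I_M, (i <= j)%N -> P (s j) <= P (s i).

(* Mechanism: row-stochastic M x M matrix, Q i j = Q(j|i). *)
Definition mechanism (Q : 'M[R]_M) : Prop :=
  (forall i j, 0 <= Q i j) /\ (forall i, \sum_(j < M) Q i j = 1).

Definition diag_dist (Q : 'M[R]_M) (i : 'I_M) : R := 1 - Q i i.

Definition valid (PP : set ('I_M -> R)) (D : R) (Q : 'M[R]_M) : Prop :=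
  mechanism Q /\ forall P, PP P -> \sum_(i < M) P i * diag_dist Q i <= D.

(* eps_DP(Q) = min {eps >= 0 : Q(xh|x1) <= e^eps Q(xh|x2)}, +oo if none;
   rendered as the infimum in the extended reals (the set is closed, so
   the infimum is the minimum whenever the set is nonempty). *)
Definition epsDP (Q : 'M[R]_M) : \bar R :=
  ereal_inf [set (e%:E)%E | e in
    [set e : R | 0 <= e /\ forall x1 x2 xh, Q x1 xh <= expR e * Q x2 xh]].

Definition epsDP_star (PP : set ('I_M -> R)) (D : R) : \bar R :=
  ereal_inf [set epsDP Q | Q in valid PP D].

(* D^(M-1) = sup_{P in PP} sum_{i=2}^M P_i  (i.e. indices 1..M-1 of 'I_M). *)
Definition Dmax (PP : set ('I_M -> R)) : R :=
  sup [set \sum_(i < M | (0 < i)%N) P i | P in PP].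

End Defs.

From HB Require Import structures.
From mathcomp Require Import all_boot all_order all_algebra.
From mathcomp Require Import all_classical all_reals all_analysis.
From mathcomp Require Import perm.
From mathcomp Require Import lra.
Import Order.TTheory GRing.Theory Num.Theory.
Local Open Scope classical_set_scope.
Local Open Scope ring_scope.

(* Only the fact that the first symbol is a mode of every P in PP matters.  If eps* = 0, there are
   valid mechanisms with Q(xh|x1) <= c Q(xh|x2) for c arbitrarily close to 1; then
   sum_i P_i Q(i|i) <= c sum_i P_1 Q(i|1) = c P_1, so the distortion is at least
   1 - c P_1, and letting c -> 1 gives 1 - P_1 <= D.  Conversely the mechanism
   sending every input to the first symbol has eps_DP = 0 and distortion 1 - P_1. *)

Section Mechanisms.
Context {R : realType} {M : nat}.
Implicit Types (Q : 'M[R]_M) (P : 'I_M -> R) (PP : set ('I_M -> R)).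

Lemma epsDP_ge0 Q : (0 <= epsDP Q)%E.
Proof. by apply/ereal_infP => _ [e [e0 _] <-]; rewrite lee_fin. Qed.

Lemma epsDP_eq0 Q : (forall x1 x2 xh, Q x1 xh = Q x2 xh) -> epsDP Q = 0%E.
Proof.
move=> Qrows; apply/eqP; rewrite eq_le epsDP_ge0 andbT.
apply: ge_ereal_inf; exists 0%E => //; exists 0 => //; split=> // x1 x2 xh.
by rewrite expR0 mul1r (Qrows x1 x2).
Qed.

Lemma epsDP_star_eq0 {PP D Q} : valid PP D Q -> epsDP Q = 0%E -> epsDP_star PP D = 0%E.
Proof.
move=> Qvalid Q0; apply/eqP; rewrite eq_le; apply/andP; split.
  by apply: ge_ereal_inf; exists 0%E => //; exists Q.
by apply/ereal_infP => _ [Q' _ <-]; exact: epsDP_ge0.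
Qed.

Lemma epsDP_star_lt PP D e : (epsDP_star PP D < e%:E)%E ->
  exists2 Q, valid PP D Q & forall x1 x2 xh, Q x1 xh <= expR e * Q x2 xh.
Proof.
move=> /ereal_inf_lt [_ [Q Qvalid <-]] /ereal_inf_lt [_ [e' [_ He'] <-]].
rewrite lte_fin => e'e; exists Q => // x1 x2 xh.
apply: le_trans (He' x1 x2 xh) _; apply: ler_wpM2r; last by rewrite ler_expR ltW.
by case: Qvalid => -[Qge0 _] _.
Qed.

Lemma distr_le1 P k : is_distr P -> P k <= 1.
Proof. by case=> Pge0 Psum; rewrite -Psum (bigD1 k) //= lerDl sumr_ge0. Qed.

Lemma sum_diag_dist P Q :
  is_distr P -> \sum_(i < M) P i * diag_dist Q i = 1 - \sum_(i < M) P i * Q i i.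
Proof.
case=> _ Psum; rewrite /diag_dist; under eq_bigr do rewrite mulrBr mulr1.
by rewrite sumrB Psum.
Qed.

Lemma diag_dist_ge {P Q} {k : 'I_M} {c : R} :
  is_distr P -> mechanism Q -> (forall i, P i <= P k) ->
  (forall i, Q i i <= c * Q k i) ->
  1 - c * P k <= \sum_(i < M) P i * diag_dist Q i.
Proof.
move=> Pdistr [Qge0 Qsum] Pk Qk; rewrite sum_diag_dist // lerB //.
have [Pge0 _] := Pdistr.
apply: le_trans (_ : \sum_(i < M) P k * (c * Q k i) <= _).
  by apply: ler_sum => i _; apply: ler_pM.
by rewrite -mulr_sumr -mulr_sumr Qsum mulr1 mulrC.
Qed.

End Mechanisms.

Section FirstSymbol.
Context {R : realType} {m : nat}.
Implicit Types (P : 'I_m.+1 -> R) (PP : set ('I_m.+1 -> R)).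

Lemma sum_ord_gt0 (F : 'I_m.+1 -> R) :
  \sum_(i < m.+1 | (0 < i)%N) F i = \sum_(i < m.+1) F i - F ord0.
Proof.
rewrite [in RHS](bigD1 ord0) //= addrC addrK.
by apply: eq_bigl => i; rewrite lt0n -val_eqE.
Qed.

Lemma tail_distr P : is_distr P -> \sum_(i < m.+1 | (0 < i)%N) P i = 1 - P ord0.
Proof. by case=> _ Psum; rewrite sum_ord_gt0 Psum. Qed.

Lemma Dmax_leP PP D : source_set PP ->
  Dmax PP <= D <-> forall P, PP P -> 1 - P ord0 <= D.
Proof.
move=> [[P0 PP0] PPdistr]; split=> [DmaxD P PPP | tailD].
  rewrite -tail_distr; last exact: PPdistr.
  apply: le_trans DmaxD; apply: sup_upper_bound; last by exists P.
  split; first by exists (\sum_(i < m.+1 | (0 < i)%N) P0 i), P0.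
  exists 1 => _ [P' PP'P' <-]; have P'distr := PPdistr P' PP'P'.
  by rewrite tail_distr // lerBlDr lerDl; case: P'distr.
apply: ge_sup; first by exists (\sum_(i < m.+1 | (0 < i)%N) P0 i), P0.
by move=> _ [P PPP <-]; rewrite tail_distr ?tailD //; exact: PPdistr.
Qed.

Definition to_first_symbol : 'M[R]_m.+1 := \matrix_(i, j) (j == ord0)%:R.

Lemma mechanism_to_first_symbol : mechanism to_first_symbol.
Proof.
split=> [i j|i]; first by rewrite mxE ler0n.
rewrite (bigD1 ord0) //= mxE eqxx big1 ?addr0 // => j /negbTE j0.
by rewrite mxE j0.
Qed.

Lemma epsDP_to_first_symbol : epsDP to_first_symbol = 0%E.
Proof. by apply: epsDP_eq0 => x1 x2 xh; rewrite !mxE. Qed.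

Lemma diag_dist_to_first_symbol P : is_distr P ->
  \sum_(i < m.+1) P i * diag_dist to_first_symbol i = 1 - P ord0.
Proof.
move=> Pdistr; rewrite -tail_distr // sum_ord_gt0 (bigD1 ord0) //=.
rewrite /diag_dist mxE eqxx subrr mulr0 add0r [in RHS](bigD1 ord0) //= addrC addrK.
by apply: eq_bigr => i i0; rewrite mxE (negbTE i0) subr0 mulr1.
Qed.

End FirstSymbol.

Theorem lemma5 (R : realType) (M : nat) (PP : set ('I_M -> R)) (D : R) :
  (2 <= M)%N ->
  source_set PP ->
  classII PP ->
  (forall P, PP P -> forall i j : 'I_M, (i <= j)%N -> P j <= P i) ->
  0 < D -> D <= 1 ->
  (epsDP_star PP D = 0%E <-> Dmax PP <= D).
Proof.
case: M PP => [//|m] PP _ PPsource _ PPdecr _ _.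
have [_ PPdistr] := PPsource.
have P_mode P : PP P -> forall i, P i <= P ord0 by move=> PPP i; exact: PPdecr.
rewrite Dmax_leP //; split=> [eps0 P PPP | tailD].
  have Pdistr := PPdistr P PPP.
  apply/ler_addgt0Pr => eta eta0.
  have /epsDP_star_lt [Q [Qmech QD] QDP] : (epsDP_star PP D < (ln (1 + eta))%:E)%E.
    by rewrite eps0 lte_fin ln_gt0 // ltrDl.
  rewrite lnK ?posrE in QDP; last lra.
  have := diag_dist_ge Pdistr Qmech (P_mode P PPP) (fun i => QDP i ord0 i).
  move=> /le_trans /(_ (QD P PPP)).
  have := distr_le1 P ord0 Pdistr; have [/(_ ord0) P0ge0 _] := Pdistr.
  nra.
have Qvalid : valid PP D to_first_symbol.
  split; first exact: mechanism_to_first_symbol.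
  by move=> P PPP; rewrite diag_dist_to_first_symbol ?tailD //; exact: PPdistr.
exact: epsDP_star_eq0 Qvalid epsDP_to_first_symbol.
Qed.
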